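(* Let $X$ be a path-connected uniform space with base point $x_0$. Then the uniform structure of $X$ is generated by the end-point projection $\pi_X\colon\widetilde X\to X$ if and only if for each entourage $E$ of $X$ there is an entourage $F$ of $X$ such that for every $x\in X$ any two points of $B(x,F)$ can be joined by a path contained in $B(x,E)$.
   Context: $B(x,E)=\{y:(x,y)\in E\}$; $f(E)=\{(f(x),f(y)):(x,y)\in E\}$. A surjection $f\colon Z\to X$ from a uniform space generates the uniform structure of $X$ if $\{f(E)\}$, $E$ an entourage of $Z$, is a base of the uniform structure of $X$. $\widetilde X$ is the set of homotopy classes rel. end-points of paths in $X$ starting at $x_0$, and $\pi_X([\alpha])=\alpha(1)$. $\widetilde X$ carries the basic uniform structure with base $\{E^\ast\}$, $E$ an entourage of $X$, where $E^\ast$ is the set of pairs $([\alpha],[\beta])$ such that $\alpha^{-1}\ast\beta$ is homotopic rel. end-points to a path contained in $B(z,E)$ for some $z\in X$. *)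

From Stdlib Require Import Reals.
Open Scope R_scope.
Set Implicit Arguments.

Record UniformSpace := {
  carrier :> Type;
  entourage : (carrier -> carrier -> Prop) -> Prop;
  ent_full : entourage (fun _ _ => True);
  ent_super : forall E F : carrier -> carrier -> Prop,
      entourage E -> (forall x y, E x y -> F x y) -> entourage F;
  ent_inter : forall E F, entourage E -> entourage F ->
      entourage (fun x y => E x y /\ F x y);
  ent_refl : forall E, entourage E -> forall x, E x x;
  ent_sym : forall E, entourage E -> entourage (fun x y => E y x);
  ent_comp : forall E, entourage E ->
      exists F, entourage F /\ forall x y z, F x y -> F y z -> E x z
}.

Definition ball {X : Type} (x : X) (E : X -> X -> Prop) : X -> Prop := fun y => E x y.

Definition in01 (t : R) : Prop := 0 <= t <= 1.

(** A path: a map [0,1] -> X continuous for the uniform topology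
    (values outside [0,1] are irrelevant). *)
Definition is_path {X : UniformSpace} (a : R -> X) : Prop :=
  forall t, in01 t -> forall E, entourage X E ->
    exists d, d > 0 /\ forall s, in01 s -> Rabs (s - t) < d -> E (a t) (a s).

Definition homotopic_rel {X : UniformSpace} (a b : R -> X) : Prop :=
  exists H : R -> R -> X,
    (forall t s E, in01 t -> in01 s -> entourage X E ->
       exists d, d > 0 /\ forall t' s', in01 t' -> in01 s' ->
         Rabs (t' - t) < d -> Rabs (s' - s) < d -> E (H t s) (H t' s')) /\
    (forall t, in01 t -> H t 0 = a t /\ H t 1 = b t) /\
    (forall s, in01 s -> H 0 s = a 0 /\ H 1 s = a 1).

Definition path_rev {X : Type} (a : R -> X) : R -> X := fun t => a (1 - t).

Definition path_concat {X : Type} (a b : R -> X) : R -> X :=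
  fun t => if Rle_dec t (1/2) then a (2 * t) else b (2 * t - 1).

Definition path_connected (X : UniformSpace) : Prop :=
  forall x y : X, exists a : R -> X, is_path a /\ a 0 = x /\ a 1 = y.

(** Representatives of points of X~: paths in X starting at x0. *)
Definition PathSp (X : UniformSpace) (x0 : X) : Type :=
  { a : R -> X | is_path a /\ a 0 = x0 }.

Definition star_ent {X : UniformSpace} (x0 : X) (E : X -> X -> Prop)
  (p q : PathSp X x0) : Prop :=
  exists (z : X) (g : R -> X), is_path g /\
    homotopic_rel (path_concat (path_rev (proj1_sig p)) (proj1_sig q)) g /\
    forall t, in01 t -> ball z E (g t).

Definition ent_tilde (X : UniformSpace) (x0 : X) (D : PathSp X x0 -> PathSp X x0 -> Prop)
  : Prop :=
  exists E, entourage X E /\ forall p q, @star_ent X x0 E p q -> D p q.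

Definition pi_X {X : UniformSpace} (x0 : X) (p : PathSp X x0) : X := proj1_sig p 1.

Definition image_rel {Z X : Type} (f : Z -> X) (D : Z -> Z -> Prop) : X -> X -> Prop :=
  fun x y => exists p q, D p q /\ f p = x /\ f q = y.

Definition generates {Z X : Type} (entZ : (Z -> Z -> Prop) -> Prop)
  (entX : (X -> X -> Prop) -> Prop) (f : Z -> X) : Prop :=
  (forall x, exists z, f z = x) /\
  (forall D, entZ D -> entX (image_rel f D)) /\
  (forall U, entX U -> exists D, entZ D /\ forall x y, image_rel f D x y -> U x y).

From Stdlib Require Import Reals Lra.
Open Scope R_scope.

(** The proof rests on two facts about [E^*]:
    - a pair in [E^*] projects to two end-points joined by a path inside a
      single ball [B(w,E)] ([star_ent_joinable]); hence [pi_X] maps [E^*] into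
      any prescribed entourage when [E] is "half" of it, and, when [pi_X]
      generates, the images of [E^*] under [pi_X] are the required entourages [F];
    - conversely a path [g] inside [B(x,E)] from [pi_X [p]] to [y] yields
      [([p], [p*g])] in [E^*] ([star_ent_extend]), because [p^-1 * (p * g)]
      is homotopic rel. end-points to a path inside [B(x,E)]
      ([backtrack_homotopy]).
    Continuity of concatenations and of the homotopy is handled uniformly
    through maps [R -> R -> X] continuous at every point of the plane
    ([gcont]), obtained by reparametrising paths through the clamping
    [clamp : R -> [0,1]] and by gluing along [t = 1/2]. *)

Definition clamp (u : R) : R := Rmax 0 (Rmin 1 u).

Ltac piecewise :=
  unfold clamp, Rmax, Rmin in *; repeat destruct Rle_dec; try split_Rabs; lra.

Lemma clamp_in01 (u : R) : in01 (clamp u).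
Proof. unfold in01; piecewise. Qed.

Lemma clamp_id (u : R) : in01 u -> clamp u = u.
Proof. unfold in01; intros; piecewise. Qed.

Lemma clamp_lip (a b : R) : Rabs (clamp a - clamp b) <= Rabs (a - b).
Proof. piecewise. Qed.

Definition gcont {X : UniformSpace} (f : R -> R -> X) : Prop :=
  forall t s E, entourage X E -> exists d, d > 0 /\ forall t' s',
    Rabs (t' - t) < d -> Rabs (s' - s) < d -> E (f t s) (f t' s').

Lemma gcont_reparam {X : UniformSpace} (f : R -> R -> X) (phi psi : R -> R -> R)
    (k : R) :
  0 < k -> gcont f ->
  (forall t s t' s', Rabs (phi t' s' - phi t s) <= k * (Rabs (t' - t) + Rabs (s' - s))) ->
  (forall t s t' s', Rabs (psi t' s' - psi t s) <= k * (Rabs (t' - t) + Rabs (s' - s))) ->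
  gcont (fun t s => f (phi t s) (psi t s)).
Proof.
  intros Hk Hf Hphi Hpsi t s E HE.
  destruct (Hf (phi t s) (psi t s) E HE) as [d [Hd Hclose]].
  exists (d / (2 * k)); split; [apply Rdiv_lt_0_compat; lra|].
  intros t' s' Ht Hs.
  assert (Hsmall : k * (Rabs (t' - t) + Rabs (s' - s)) < d).
  { replace d with (k * (2 * (d / (2 * k)))) by (field; lra).
    apply Rmult_lt_compat_l; lra. }
  apply Hclose.
  - specialize (Hphi t s t' s'); lra.
  - specialize (Hpsi t s t' s'); lra.
Qed.

Lemma path_gcont {X : UniformSpace} (p : R -> X) :
  is_path p -> gcont (fun t (_ : R) => p (clamp t)).
Proof.
  intros Hp t s E HE.
  destruct (Hp _ (clamp_in01 t) E HE) as [d [Hd Hclose]].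
  exists d; split; [exact Hd|]; intros t' s' Ht _.
  apply Hclose; [apply clamp_in01|].
  eapply Rle_lt_trans; [apply clamp_lip|exact Ht].
Qed.

Lemma gcont_glue {X : UniformSpace} (c : R) (A B : R -> R -> X) :
  gcont A -> gcont B -> (forall s, A c s = B c s) ->
  gcont (fun t s => if Rle_dec t c then A t s else B t s).
Proof.
  intros HA HB Hc t s E HE.
  destruct (HA t s E HE) as [dA [HdA CA]].
  destruct (HB t s E HE) as [dB [HdB CB]].
  destruct (Rtotal_order t c) as [Hlt|[<-|Hgt]].
  - exists (Rmin dA (c - t)); split; [apply Rmin_pos; lra|].
    intros t' s' Ht Hs; apply Rmin_Rgt_l in Ht as [Ht Htc].
    destruct (Rle_dec t c); [|lra].
    destruct (Rle_dec t' c); [|exfalso; piecewise].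
    apply CA; [exact Ht|piecewise].
  - exists (Rmin dA dB); split; [apply Rmin_pos; lra|].
    intros t' s' Ht Hs; apply Rmin_Rgt_l in Ht as [HtA HtB];
      apply Rmin_Rgt_l in Hs as [HsA HsB].
    destruct (Rle_dec t t); [|lra].
    destruct (Rle_dec t' t); [apply CA; lra|].
    rewrite Hc; apply CB; lra.
  - exists (Rmin dB (t - c)); split; [apply Rmin_pos; lra|].
    intros t' s' Ht Hs; apply Rmin_Rgt_l in Ht as [Ht Htc].
    destruct (Rle_dec t c); [lra|].
    destruct (Rle_dec t' c); [exfalso; piecewise|].
    apply CB; [exact Ht|piecewise].
Qed.

Definition concat2 {X : Type} (f g : R -> R -> X) : R -> R -> X :=
  fun t s => path_concat (fun u => f u s) (fun u => g u s) t.

Lemma concat2_gcont {X : UniformSpace} (f g : R -> R -> X) :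
  gcont f -> gcont g -> (forall s, f 1 s = g 0 s) -> gcont (concat2 f g).
Proof.
  intros Hf Hg Hfg.
  apply gcont_glue.
  - apply (gcont_reparam f (fun t _ => 2 * t) (fun _ s => s) 2); auto; intros; piecewise.
  - apply (gcont_reparam g (fun t _ => 2 * t - 1) (fun _ s => s) 2); auto; intros; piecewise.
  - intros s; replace (2 * (1/2)) with 1 by field; rewrite Rminus_diag; apply Hfg.
Qed.

Lemma gcont_is_path {X : UniformSpace} (a : R -> X) (H : R -> R -> X) (c : R) :
  gcont H -> (forall t, in01 t -> a t = H t c) -> is_path a.
Proof.
  intros HH Ha t Ht E HE.
  destruct (HH t c E HE) as [d [Hd Hclose]].
  exists d; split; [exact Hd|]; intros s Hs Hst.
  rewrite (Ha t Ht), (Ha s Hs); apply Hclose; [exact Hst|].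
  rewrite Rminus_diag, Rabs_R0; lra.
Qed.

Lemma gcont_homotopic {X : UniformSpace} (a b : R -> X) (H : R -> R -> X) :
  gcont H ->
  (forall t, in01 t -> H t 0 = a t /\ H t 1 = b t) ->
  (forall s, in01 s -> H 0 s = a 0 /\ H 1 s = a 1) ->
  homotopic_rel a b.
Proof.
  intros HH Hbot Hside; exists H; split; [|split; assumption].
  intros t s E _ _ HE; destruct (HH t s E HE) as [d [Hd Hclose]].
  exists d; split; [exact Hd|]; intros t' s' _ _; apply Hclose.
Qed.

Lemma const_is_path {X : UniformSpace} (x : X) : is_path (fun _ : R => x).
Proof.
  intros t _ E HE; exists 1; split; [lra|]; intros; apply (ent_refl _ _ HE).
Qed.

Lemma path_rev_is_path {X : UniformSpace} (a : R -> X) :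
  is_path a -> is_path (path_rev a).
Proof.
  intros Ha t Ht E HE; unfold in01 in Ht.
  destruct (Ha (1 - t) ltac:(unfold in01; lra) E HE) as [d [Hd Hclose]].
  exists d; split; [exact Hd|]; intros s Hs Hst; unfold in01 in Hs.
  apply Hclose; [unfold in01; lra|piecewise].
Qed.

Lemma path_concat_is_path {X : UniformSpace} (a b : R -> X) :
  is_path a -> is_path b -> a 1 = b 0 -> is_path (path_concat a b).
Proof.
  intros Ha Hb Hab.
  apply (gcont_is_path _ (concat2 (fun u _ => a (clamp u)) (fun u _ => b (clamp u))) 0).
  - apply concat2_gcont; try apply path_gcont; auto.
    intros; rewrite !clamp_id by (unfold in01; lra); exact Hab.
  - intros t Ht; unfold in01, concat2, path_concat in *.
    destruct Rle_dec; rewrite clamp_id; auto; unfold in01; lra.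
Qed.

Lemma path_concat_0 {X : Type} (a b : R -> X) : path_concat a b 0 = a 0.
Proof. unfold path_concat; destruct Rle_dec; [f_equal; ring|lra]. Qed.

Lemma path_concat_1 {X : Type} (a b : R -> X) : path_concat a b 1 = b 1.
Proof. unfold path_concat; destruct Rle_dec; [lra|f_equal; ring]. Qed.

Definition joinable_in {X : UniformSpace} (P : X -> Prop) (y z : X) : Prop :=
  exists g : R -> X, is_path g /\ g 0 = y /\ g 1 = z /\ forall t, in01 t -> P (g t).

Lemma joinable_mono {X : UniformSpace} (P Q : X -> Prop) (y z : X) :
  (forall u, P u -> Q u) -> joinable_in P y z -> joinable_in Q y z.
Proof.
  intros HPQ [g [Hg [H0 [H1 HP]]]]; exists g; repeat split; auto.
Qed.

Lemma joinable_rev {X : UniformSpace} (P : X -> Prop) (y z : X) :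
  joinable_in P y z -> joinable_in P z y.
Proof.
  intros [g [Hg [H0 [H1 HP]]]]; exists (path_rev g).
  split; [apply path_rev_is_path, Hg|].
  unfold path_rev; rewrite Rminus_0_r, Rminus_diag.
  repeat split; auto.
  intros t Ht; apply HP; unfold in01 in *; lra.
Qed.

Lemma joinable_trans {X : UniformSpace} (P : X -> Prop) (x y z : X) :
  joinable_in P x y -> joinable_in P y z -> joinable_in P x z.
Proof.
  intros [g [Hg [Hg0 [Hg1 HgP]]]] [h [Hh [Hh0 [Hh1 HhP]]]].
  exists (path_concat g h); rewrite path_concat_0, path_concat_1.
  repeat split; auto.
  - apply path_concat_is_path; [exact Hg|exact Hh|congruence].
  - intros t Ht; unfold path_concat, in01 in *.
    destruct Rle_dec; [apply HgP|apply HhP]; lra.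
Qed.

(** [p^-1 * (p * g)] is homotopic rel. end-points to the path which rests at
    [p 1] and then runs along [g]; the homotopy retracts [p] onto its end
    point, at time [s] keeping only [p] restricted to [[s,1]]. *)
Lemma backtrack_homotopy {X : UniformSpace} (p g : R -> X) :
  is_path p -> is_path g -> p 1 = g 0 ->
  homotopic_rel (path_concat (path_rev p) (path_concat p g))
                (path_concat (fun _ => p 1) (path_concat (fun _ => p 1) g)).
Proof.
  intros Hp Hg Hpg.
  set (H := concat2 (fun u s => p (clamp (Rmax (1 - u) s)))
                    (concat2 (fun u s => p (clamp (Rmax u s))) (fun u _ => g (clamp u)))).
  assert (HH : gcont H).
  { assert (Hpc := path_gcont p Hp).
    apply concat2_gcont; [| apply concat2_gcont |].
    - apply (gcont_reparam (fun t _ => p (clamp t)) (fun u s => Rmax (1 - u) s) (fun _ s => s) 1); auto;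
        intros; piecewise.
    - apply (gcont_reparam (fun t _ => p (clamp t)) (fun u s => Rmax u s) (fun _ s => s) 1); auto;
        intros; piecewise.
    - apply path_gcont, Hg.
    - intros s; replace (clamp (Rmax 1 s)) with 1 by piecewise.
      rewrite clamp_id by (unfold in01; lra); exact Hpg.
    - intros s; unfold concat2; rewrite path_concat_0; f_equal; f_equal; f_equal; ring. }
  apply (gcont_homotopic _ _ H HH).
  - intros t Ht; unfold H, concat2, path_concat, path_rev, in01 in *.
    split; repeat destruct Rle_dec; f_equal; piecewise.
  - intros s Hs; unfold H, concat2, path_concat, path_rev, in01 in *.
    split; repeat destruct Rle_dec; f_equal; piecewise.
Qed.

Definition mk_path {X : UniformSpace} {x0 : X} {a : R -> X} (Ha : is_path a)
    (Ha0 : a 0 = x0) : PathSp X x0 :=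
  exist (fun a => is_path a /\ a 0 = x0) a (conj Ha Ha0).

(** The projections of a pair in [E^*] are joined inside some ball [B(w,E)]:
    the witness path of [E^*] runs between them. *)
Lemma star_ent_joinable {X : UniformSpace} {x0 : X} {E : X -> X -> Prop}
    {p q : PathSp X x0} :
  star_ent E p q -> exists w, joinable_in (ball w E) (pi_X p) (pi_X q).
Proof.
  intros [w [g [Hg [[H [_ [Hbot Hside]]] HgE]]]].
  assert (H01 : in01 0) by (unfold in01; lra).
  assert (H11 : in01 1) by (unfold in01; lra).
  exists w, g; repeat split; auto.
  - rewrite <- (proj2 (Hbot 0 H01)), (proj1 (Hside 1 H11)), path_concat_0.
    unfold path_rev, pi_X; f_equal; ring.
  - rewrite <- (proj2 (Hbot 1 H11)), (proj2 (Hside 1 H11)), path_concat_1.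
    reflexivity.
Qed.

(** Extending a path [p] by a path [g] inside [B(pi_X [p], E)] gives a pair
    [([p], [p * g])] in [E^*]: by [backtrack_homotopy], [p^-1 * (p * g)] is
    homotopic to a path resting at [pi_X [p]] and then following [g]. *)
Lemma star_ent_extend {X : UniformSpace} {x0 : X} {E : X -> X -> Prop}
    (p : PathSp X x0) (y : X) :
  entourage X E -> joinable_in (ball (pi_X p) E) (pi_X p) y ->
  exists q : PathSp X x0, pi_X q = y /\ star_ent E p q.
Proof.
  destruct p as [a [Ha Ha0]]; unfold pi_X; simpl.
  intros HE [g [Hg [Hg0 [Hg1 HgE]]]].
  assert (Hag : a 1 = g 0) by congruence.
  exists (mk_path (path_concat_is_path _ _ Ha Hg Hag) (eq_trans (path_concat_0 a g) Ha0)).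
  split; [simpl; rewrite path_concat_1; exact Hg1|].
  exists (a 1), (path_concat (fun _ => a 1) (path_concat (fun _ => a 1) g)); simpl.
  split; [|split; [apply backtrack_homotopy; auto|]].
  - apply path_concat_is_path;
      [apply const_is_path|apply path_concat_is_path; auto using const_is_path|].
    rewrite path_concat_0; reflexivity.
  - intros t Ht; unfold ball, path_concat, in01 in *.
    repeat destruct Rle_dec; try apply (ent_refl _ _ HE).
    apply HgE; unfold in01; lra.
Qed.

Lemma ent_half {X : UniformSpace} (U : X -> X -> Prop) : entourage X U ->
  exists E, entourage X E /\ forall w a b, E w a -> E w b -> U a b.
Proof.
  intros HU; destruct (ent_comp _ _ HU) as [F [HF HFF]].
  exists (fun x y => F x y /\ F y x); split.
  - apply ent_inter; [exact HF|apply ent_sym, HF].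
  - intros w a b [_ Haw] [Hwb _]; exact (HFF _ _ _ Haw Hwb).
Qed.

Lemma pi_X_uniformly_continuous {X : UniformSpace} (x0 : X) (U : X -> X -> Prop) :
  entourage X U -> exists E, entourage X E /\
    forall x y, image_rel (@pi_X X x0) (star_ent E) x y -> U x y.
Proof.
  intros HU; destruct (ent_half U HU) as [E [HE Hhalf]].
  exists E; split; [exact HE|].
  intros x y [p [q [Hpq [<- <-]]]].
  destruct (star_ent_joinable Hpq) as [w [g [_ [<- [<- HgE]]]]].
  apply (Hhalf w); apply HgE; unfold in01; lra.
Qed.

Definition loc_path_connected (X : UniformSpace) : Prop :=
  forall E, entourage X E -> exists F, entourage X F /\
    forall x y z : X, ball x F y -> ball x F z -> joinable_in (ball x E) y z.

(** If [pi_X] generates, the images of the [E^*] witness local path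
    connectedness: both points are joined to the centre inside a ball. *)
Lemma generates_loc_path_connected {X : UniformSpace} (x0 : X) :
  generates (@ent_tilde X x0) (entourage X) (@pi_X X x0) -> loc_path_connected X.
Proof.
  intros [_ [Himg _]] E HE; destruct (ent_half E HE) as [E1 [HE1 Hhalf]].
  exists (image_rel (@pi_X X x0) (star_ent E1)); split.
  { apply Himg; exists E1; split; auto. }
  assert (Hcentre : forall x y, image_rel (@pi_X X x0) (star_ent E1) x y ->
                      joinable_in (ball x E) x y).
  { intros x y [p [q [Hpq [<- <-]]]].
    destruct (star_ent_joinable Hpq) as [w Hj].
    apply (joinable_mono (ball w E1)); [|exact Hj].
    destruct Hj as [g [_ [Hg0 [_ HgE]]]]; intros u Hu.
    apply (Hhalf w); [rewrite <- Hg0; apply HgE; unfold in01; lra|exact Hu]. }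
  intros x y z Hy Hz; apply joinable_trans with x; [apply joinable_rev|]; auto.
Qed.

(** Conversely, in a path-connected, uniformly locally path connected space
    every entourage [F] given by local path connectedness for [E] lies in the
    image of [E^*], so [pi_X] generates. *)
Lemma loc_path_connected_generates {X : UniformSpace} (x0 : X) :
  path_connected X -> loc_path_connected X ->
  generates (@ent_tilde X x0) (entourage X) (@pi_X X x0).
Proof.
  intros hX Hloc; split; [|split].
  - intros x; destruct (hX x0 x) as [a [Ha [Ha0 Ha1]]].
    exists (mk_path Ha Ha0); exact Ha1.
  - intros D [E [HE HD]]; destruct (Hloc E HE) as [F [HF HFj]].
    apply (ent_super _ _ _ HF); intros x y Hxy.
    destruct (hX x0 x) as [a [Ha [Ha0 Ha1]]].
    set (p := mk_path Ha Ha0); assert (Hp : pi_X p = x) by exact Ha1.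
    destruct (star_ent_extend p y HE) as [q [Hq Hpq]].
    { rewrite Hp; apply HFj; [apply (ent_refl _ _ HF)|exact Hxy]. }
    exists p, q; auto.
  - intros U HU; destruct (pi_X_uniformly_continuous x0 U HU) as [E [HE Hsub]].
    exists (star_ent E); split; [exists E; auto|exact Hsub].
Qed.

Theorem mainTheorem4 (X : UniformSpace) (x0 : X) (hX : path_connected X) :
  generates (@ent_tilde X x0) (entourage X) (@pi_X X x0) <->
  (forall E, entourage X E -> exists F, entourage X F /\
     forall x y z : X, ball x F y -> ball x F z ->
       exists g : R -> X, is_path g /\ g 0 = y /\ g 1 = z /\
         forall t, in01 t -> ball x E (g t)).
Proof.
  split.
  - exact (generates_loc_path_connected x0).
  - exact (loc_path_connected_generates x0 hX).
Qed.
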